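(* Let $Z\in\{0,1\}$ be a treatment variable and $X$ pre-treatment covariates with distribution $\mathcal{Q}$. Let $\mathcal{P}(Z=1\mid X)$ be the true conditional treatment-assignment model and $\mathcal{P}'(Z=1\mid X)$ an approximation of it produced by logistic regression. Let $\delta=\int_X\mathcal{Q}(X)\mathcal{P}(Z=1\mid X)\,dX$ and $\delta'=\int_X\mathcal{Q}(X)\mathcal{P}'(Z=1\mid X)\,dX$, and let $\mathcal{Q}\mathcal{P}$ (resp. $\mathcal{Q}\mathcal{P}'$) denote the distribution of $X$ given $Z=1$ when $X\sim\mathcal{Q}$ and $Z$ is assigned according to $\mathcal{P}$ (resp. $\mathcal{P}'$), i.e. with density $\mathcal{Q}(x)\mathcal{P}(Z=1\mid x)/\delta$ (resp. $\mathcal{Q}(x)\mathcal{P}'(Z=1\mid x)/\delta'$). Let $f$ be any function of $X$ with $0\le f(x)\le M$ for all $x$, for a fixed constant $M$. For $0\le\epsilon,\gamma\le1$, if $\mathbb{E}_{X\sim\mathcal{Q}}\left(|\mathcal{P}(Z=1\mid X)-\mathcal{P}'(Z=1\mid X)|\right)\le\epsilon$ and $\mathbb{E}_{X\sim\mathcal{Q}\mathcal{P}}(f(X))\le\gamma M$, then $$\mathbb{E}_{X\sim\mathcal{Q}\mathcal{P}'}(f(X))\le\left(\frac{\epsilon}{\delta}+\gamma\right)\left(\frac{\delta}{\delta-\epsilon}\right)M.$$ *)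

From HB Require Import structures.
From mathcomp Require Import all_boot all_order all_algebra.
From mathcomp Require Import all_classical all_reals all_analysis.
Set Implicit Arguments. Unset Strict Implicit. Unset Printing Implicit Defensive.
Import Order.TTheory GRing.Theory Num.Theory.
Local Open Scope ring_scope.
Local Open Scope classical_set_scope.

Definition treat_prob d (T : measurableType d) (R : realType)
  (Q : probability T R) (p : T -> R) : R :=
  Rintegral Q setT p.

(* E_{X ~ QP}(f(X)) where QP has density Q(x) p(x) / delta_p. *)
Definition cond_expect d (T : measurableType d) (R : realType)
  (Q : probability T R) (p f : T -> R) : R :=
  Rintegral Q setT (fun x => f x * p x) / treat_prob Q p.

From HB Require Import structures.
From mathcomp Require Import all_boot all_order all_algebra.
From mathcomp Require Import all_classical all_reals all_analysis.
From mathcomp Require Import measurable_realfun ring lra.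
Set Implicit Arguments.
Unset Strict Implicit.
Unset Printing Implicit Defensive.

Import Order.TTheory GRing.Theory Num.Theory.
Local Open Scope ring_scope.
Local Open Scope classical_set_scope.

(* Pointwise [f p' <= f p + M |p - p'|]; integrating against Q gives
   [E(f p') <= E(f p) + M eps <= (gamma delta + eps) M], and the same estimate
   with [f = 1] gives [delta' >= delta - eps].  Dividing the first bound by the
   second yields the claim, because
   [(eps / delta + gamma) (delta / (delta - eps)) = (eps + gamma delta) / (delta - eps)]. *)

Section bounded_Rintegral.
Context d (T : measurableType d) (R : realType) (mu : {finite_measure set T -> \bar R}).

Lemma bounded_integrable (g : T -> R) (K : R) :
  measurable_fun setT g -> (forall x, `|g x| <= K) ->
  mu.-integrable setT (EFin \o g).
Proof.
move=> mg gK.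
apply: (le_integrable _ _ _ (finite_measure_integrable_cst mu K measurableT)) => //.
- exact/measurable_EFinP.
- by move=> x _ /=; rewrite lee_fin (le_trans (gK x)) ?ler_norm.
Qed.

Lemma measurable_dist (g h : T -> R) :
  measurable_fun setT g -> measurable_fun setT h ->
  measurable_fun setT (fun x => `|g x - h x|).
Proof. by move=> mg mh; apply: measurableT_comp => //; exact: measurable_funB. Qed.

Lemma dist_bounded (g h : T -> R) (K : R) :
  (forall x, `|g x| <= K) -> (forall x, `|h x| <= K) ->
  forall x, `| `|g x - h x| | <= K + K.
Proof. by move=> gK hK x; rewrite normr_id (le_trans (ler_normB _ _)) ?lerD. Qed.

Lemma Rintegral_le_add_dist (g h : T -> R) (K : R) :
  measurable_fun setT g -> measurable_fun setT h ->
  (forall x, `|g x| <= K) -> (forall x, `|h x| <= K) ->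
  Rintegral mu setT h <=
    Rintegral mu setT g + Rintegral mu setT (fun x => `|g x - h x|).
Proof.
move=> mg mh gK hK; have mgh := measurable_dist mg mh.
rewrite -RintegralD //.
- apply: le_Rintegral => //.
  + exact: bounded_integrable mh hK.
  + apply: (@bounded_integrable _ (K + (K + K)) (measurable_funD mg mgh)) => x.
    by rewrite (le_trans (ler_normD _ _)) ?lerD ?(dist_bounded gK hK).
  + by move=> x _; rewrite -lerBlDl distrC ler_norm.
- exact: bounded_integrable mg gK.
- exact: bounded_integrable mgh (dist_bounded gK hK).
Qed.

Lemma Rintegral_weighted_le_add_dist (f g h : T -> R) (K M : R) :
  measurable_fun setT f -> measurable_fun setT g -> measurable_fun setT h ->
  (forall x, 0 <= f x <= M) -> (forall x, `|g x| <= K) -> (forall x, `|h x| <= K) ->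
  Rintegral mu setT (fun x => f x * h x) <=
    Rintegral mu setT (fun x => f x * g x) + M * Rintegral mu setT (fun x => `|g x - h x|).
Proof.
move=> mf mg mh f0M gK hK.
have fM x : `|f x| <= M by have /andP[f0 ?] := f0M x; rewrite ger0_norm.
have fK (k : T -> R) : (forall x, `|k x| <= K) -> forall x, `|f x * k x| <= M * K.
  by move=> kK x; rewrite normrM ler_pM.
apply: (le_trans (Rintegral_le_add_dist (measurable_funM mf mg)
                   (measurable_funM mf mh) (fK _ gK) (fK _ hK))).
rewrite lerD2l -RintegralZl //; last first.
  exact: bounded_integrable (measurable_dist mg mh) (dist_bounded gK hK).
apply: le_Rintegral => //.
- apply: bounded_integrable (dist_bounded (fK _ gK) (fK _ hK)).
  exact: measurable_dist (measurable_funM mf mg) (measurable_funM mf mh).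
- apply: (@bounded_integrable _ (`|M| * (K + K))).
    exact: measurable_funM (measurable_dist mg mh).
  by move=> x; rewrite normrM ler_wpM2l ?(dist_bounded gK hK).
- by move=> x _; rewrite -mulrBr normrM ler_wpM2r.
Qed.

End bounded_Rintegral.

Lemma div_le_shifted_ratio (R : realFieldType) (a delta delta' eps gamma M : R) :
  0 <= eps -> eps < delta -> delta - eps <= delta' ->
  0 <= a -> a <= (eps + gamma * delta) * M ->
  a / delta' <= (eps / delta + gamma) * (delta / (delta - eps)) * M.
Proof.
move=> eps0 lt_eps_delta le_delta' a0 le_a.
have delta0 : 0 < delta by lra.
have gap0 : 0 < delta - eps by lra.
set k := (_ * _ * M).
have k_eps : k * (delta - eps) = (eps + gamma * delta) * M.
  by rewrite /k; field; rewrite !gt_eqF.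
have k0 : 0 <= k.
  rewrite -(pmulr_lge0 _ gap0) k_eps.
  exact: le_trans a0 le_a.
rewrite ler_pdivrMr; last lra.
apply: (le_trans le_a); rewrite -k_eps; exact: ler_wpM2l.
Qed.

Theorem lemma20 (d : measure_display) (T : measurableType d) (R : realType)
  (Q : probability T R) (p p' f : T -> R) (M eps gamma : R)
  (mp : measurable_fun setT p) (mp' : measurable_fun setT p')
  (mf : measurable_fun setT f)
  (p01 : forall x, 0 <= p x <= 1) (p'01 : forall x, 0 <= p' x <= 1)
  (f0M : forall x, 0 <= f x <= M)
  (eps01 : 0 <= eps <= 1) (gamma01 : 0 <= gamma <= 1)
  (heps : Rintegral Q setT (fun x => `|p x - p' x|) <= eps)
  (hgamma : cond_expect Q p f <= gamma * M)
  (hdelta : eps < treat_prob Q p) :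
  cond_expect Q p' f <=
    (eps / treat_prob Q p + gamma)
    * (treat_prob Q p / (treat_prob Q p - eps)) * M.
Proof.
have M0 : 0 <= M.
  have /set0P[x _] : [set: T] != set0.
    apply/eqP => T0; have := probability_setT Q.
    by rewrite T0 measure0 => -[/eqP]; rewrite eq_sym oner_eq0.
  by have /andP[f0 fM] := f0M x; exact: le_trans fM.
have unit_bound (q : T -> R) : (forall x, 0 <= q x <= 1) -> forall x, `|q x| <= 1.
  by move=> q01 x; have /andP[q0 q1] := q01 x; rewrite ger0_norm.
have /andP[eps0 _] := eps01.
have delta0 : 0 < treat_prob Q p by apply: le_lt_trans hdelta.
have mass_p' : treat_prob Q p - eps <= treat_prob Q p'.
  have := Rintegral_le_add_dist Q mp' mp (unit_bound _ p'01) (unit_bound _ p01).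
  have -> : Rintegral Q setT (fun x => `|p' x - p x|) =
            Rintegral Q setT (fun x => `|p x - p' x|).
    by apply: eq_Rintegral => x _; rewrite distrC.
  rewrite /treat_prob; lra.
have weight_p' := Rintegral_weighted_le_add_dist Q mf mp mp' f0M
                    (unit_bound _ p01) (unit_bound _ p'01).
move: hgamma; rewrite /cond_expect ler_pdivrMr // => weight_p.
apply: (div_le_shifted_ratio eps0 hdelta mass_p').
  apply: Rintegral_ge0 => x _.
  by have /andP[f0 _] := f0M x; have /andP[p'0 _] := p'01 x; exact: mulr_ge0.
have := ler_wpM2l M0 heps; lra.
Qed.
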